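(* Let $n\geq 4$ and let $\delta: VT_n\to\mathrm{GL}_{n+1}(\mathbb{C})$ be a homogeneous $3$-local representation of $VT_n$, equivalent to one of the representations $\delta_j$, $1\le j\le 14$, described below. Then: (1) if $\delta$ is equivalent to $\delta_1$ with $e=1$, then $\delta$ is unfaithful; (2) if $\delta$ is equivalent to $\delta_2$ with $e=1$, then $\delta$ is unfaithful; (3) if $\delta$ is equivalent to $\delta_3$ with $d=\frac1p$, then $\delta$ is unfaithful; (4) if $\delta$ is equivalent to $\delta_4$ with $h=\frac1k$, then $\delta$ is unfaithful; (5) if $\delta$ is equivalent to $\delta_j$ for some $5\le j\le 14$, then $\delta$ is unfaithful.
   Context: The virtual twin group $VT_n$ has generators $s_1,\dots,s_{n-1},\rho_1,\dots,\rho_{n-1}$ and defining relations: $s_i^2=1$; $s_is_j=s_js_i$ ($|i-j|\ge2$); $\rho_i\rho_{i+1}\rho_i=\rho_{i+1}\rho_i\rho_{i+1}$ ($1\le i\le n-2$); $\rho_i\rho_j=\rho_j\rho_i$ ($|i-j|\ge2$); $\rho_i^2=1$; $s_i\rho_j=\rho_js_i$ ($|i-j|\ge2$); $\rho_i\rho_{i+1}s_i=s_{i+1}\rho_i\rho_{i+1}$ ($1\le i\le n-2$). A homogeneous $3$-local representation $\delta:VT_n\to\mathrm{GL}_{n+1}(\mathbb{C})$ is one with $\delta(s_i)=\mathrm{diag}(I_{i-1},M,I_{n-i-1})$, $\delta(\rho_i)=\mathrm{diag}(I_{i-1},N,I_{n-i-1})$ for fixed $M,N\in\mathrm{GL}_3(\mathbb{C})$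 (block-diagonal; $I_r$ the $r\times r$ identity). Equivalent means conjugate by an invertible matrix; unfaithful means not injective. The representation $\delta_j$ is the homogeneous $3$-local representation with $(M,N)=(M_j,N_j)$, where ($\mathbb{C}^*=\mathbb{C}\setminus\{0\}$): $M_1=\begin{pmatrix}1&0&0\\0&e&\frac{1-e^2}{h}\\0&h&-e\end{pmatrix}$, $N_1=\begin{pmatrix}1&0&0\\0&0&p\\0&\frac1p&0\end{pmatrix}$ ($e\in\mathbb{C}$, $h,p\in\mathbb{C}^*$); $M_2=\begin{pmatrix}-e&\frac{1-e^2}{d}&0\\d&e&0\\0&0&1\end{pmatrix}$, $N_2=\begin{pmatrix}0&k&0\\\frac1k&0&0\\0&0&1\end{pmatrix}$ ($e\in\mathbb{C}$, $d,k\in\mathbb{C}^*$); $M_3=\begin{pmatrix}1&0&0\\d&-1&2p-dp^2\\0&0&1\end{pmatrix}$, $N_3=\begin{pmatrix}1&0&0\\\frac1p&-1&p\\0&0&1\end{pmatrix}$ ($d\in\mathbb{C}$, $p\in\mathbb{C}^*$); $M_4=\begin{pmatrix}1&2k-hk^2&0\\0&-1&0\\0&h&1\end{pmatrix}$, $N_4=\begin{pmatrix}1&k&0\\0&-1&0\\0&\frac1k&1\end{pmatrix}$ ($h\in\mathbb{C}$, $k\in\mathbb{C}^*$); $M_5=\begin{pmatrix}1&b&0\\0&-1&0\\0&0&1\end{pmatrix}$, $N_5=N_2$ ($b\in\mathbb{C}$, $k\in\mathbb{C}^*$); $M_6=\begin{pmatrix}-1&b&0\\0&1&0\\0&0&1\end{pmatrix}$,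 $N_6=N_2$ ($b\in\mathbb{C}$, $k\in\mathbb{C}^*$); $M_7=I_3$, $N_7=\begin{pmatrix}1&0&0\\\frac1p&-1&p\\0&0&1\end{pmatrix}$ ($p\in\mathbb{C}^*$); $M_8=I_3$, $N_8=\begin{pmatrix}1&k&0\\0&-1&0\\0&\frac1k&1\end{pmatrix}$ ($k\in\mathbb{C}^*$); $M_9=\mathrm{diag}(1,-1,-1)$, $N_9=\begin{pmatrix}1&0&0\\0&0&p\\0&\frac1p&0\end{pmatrix}$ ($p\in\mathbb{C}^*$); $M_{10}=\mathrm{diag}(1,-1,1)$, $N_{10}=N_9$; $M_{11}=I_3$, $N_{11}=N_9$ ($p\in\mathbb{C}^*$); $M_{12}=\mathrm{diag}(-1,-1,1)$, $N_{12}=\begin{pmatrix}0&k&0\\\frac1k&0&0\\0&0&1\end{pmatrix}$; $M_{13}=I_3$, $N_{13}=N_{12}$ ($k\in\mathbb{C}^*$); $M_{14}=N_{14}=I_3$. *)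

From mathcomp Require Import all_boot all_algebra.
From mathcomp Require Import complex.
From mathcomp Require Import Rstruct.
Set Implicit Arguments. Unset Strict Implicit. Unset Printing Implicit Defensive.
Import GRing.Theory.
Local Open Scope ring_scope.

Definition C : Type := complex Rdefinitions.R.

(* Generators of VT_n:  VTs k = s_(k+1),  VTrho k = rho_(k+1),  k : 'I_(n-1),
   so the index i = k+1 ranges over 1..n-1. *)
Inductive VTgen (n : nat) : Type :=
  | VTs of 'I_n.-1
  | VTrho of 'I_n.-1.

Definition VTrel (n : nat) (T : Type) (mul : T -> T -> T) (one : T)
    (f : VTgen n -> T) : Prop :=
  let far (i j : 'I_n.-1) := ((val i + 2 <= val j) || (val j + 2 <= val i))%N in
  let nxt (i j : 'I_n.-1) := (val j == (val i).+1)%N in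
  (forall i, mul (f (VTs i)) (f (VTs i)) = one) /\
  (forall i j, far i j -> mul (f (VTs i)) (f (VTs j)) = mul (f (VTs j)) (f (VTs i))) /\
  (forall i j, nxt i j ->
        mul (mul (f (VTrho i)) (f (VTrho j))) (f (VTrho i))
        = mul (mul (f (VTrho j)) (f (VTrho i))) (f (VTrho j))) /\
  (forall i j, far i j -> mul (f (VTrho i)) (f (VTrho j)) = mul (f (VTrho j)) (f (VTrho i))) /\
  (forall i, mul (f (VTrho i)) (f (VTrho i)) = one) /\
  (forall i j, far i j -> mul (f (VTs i)) (f (VTrho j)) = mul (f (VTrho j)) (f (VTs i))) /\
  (forall i j, nxt i j ->
        mul (mul (f (VTrho i)) (f (VTrho j))) (f (VTs i))
        = mul (mul (f (VTs j)) (f (VTrho i))) (f (VTrho j))).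

Record group := Group {
  gcarrier :> Type;
  gmul : gcarrier -> gcarrier -> gcarrier;
  gone : gcarrier;
  ginv : gcarrier -> gcarrier;
  gmulA : forall x y z, gmul x (gmul y z) = gmul (gmul x y) z;
  gmul1 : forall x, gmul gone x = x;
  gmulV : forall x, gmul (ginv x) x = gone }.

(* A word in the generators (all generators are involutions in VT_n, so every
   element of VT_n is represented by a positive word), evaluated in a monoid. *)
Definition evalw (n : nat) (T : Type) (mul : T -> T -> T) (one : T)
    (f : VTgen n -> T) (w : seq (VTgen n)) : T :=
  foldr mul one (map f w).

(* w represents the identity of VT_n = <gens | VTrel>  iff  it evaluates to the
   identity under every assignment of the generators in every group satisfying
   the defining relations (universal property of the presentation). *)
Definition VTtrivial (n : nat) (w : seq (VTgen n)) : Prop :=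
  forall (G : group) (f : VTgen n -> G),
    VTrel (@gmul G) (gone G) f -> evalw (@gmul G) (gone G) f w = gone G.

Definition loc3 (n : nat) (M : 'M[C]_3) (k : nat) : 'M[C]_(n.+1) :=
  \matrix_(a, b)
    if ((k <= a <= k + 2) && (k <= b <= k + 2))%N
    then M (inord (a - k)) (inord (b - k))
    else ((a == b)%:R : C).

(* The homogeneous 3-local representation with blocks (M, N), on generators:
   delta(s_i) = diag(I_(i-1), M, I_(n-i-1)), delta(rho_i) = diag(I_(i-1), N, I_(n-i-1)). *)
Definition delta (n : nat) (M N : 'M[C]_3) (g : VTgen n) : 'M[C]_(n.+1) :=
  match g with
  | VTs k => loc3 n M (val k)
  | VTrho k => loc3 n N (val k)
  end.

Definition unfaithful (n : nat) (M N : 'M[C]_3) : Prop :=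
  exists w : seq (VTgen n),
    evalw (@mulmx C n.+1 n.+1 n.+1) 1%R (delta M N) w = 1%R /\ ~ VTtrivial w.

Definition equiv_rep (n : nat) (M N M' N' : 'M[C]_3) : Prop :=
  exists P : 'M[C]_(n.+1), P \in unitmx /\
    forall g : VTgen n, delta M N g = invmx P *m delta M' N' g *m P.

Definition mx3 (r1 r2 r3 : seq C) : 'M[C]_3 :=
  \matrix_(i < 3, j < 3) (nth [::] [:: r1; r2; r3] i)`_j.

Definition M1 (e h : C) : 'M[C]_3 :=
  mx3 [:: 1; 0; 0] [:: 0; e; (1 - e ^+ 2) / h] [:: 0; h; - e].
Definition N1 (p : C) : 'M[C]_3 :=
  mx3 [:: 1; 0; 0] [:: 0; 0; p] [:: 0; p^-1; 0].
Definition M2 (e d : C) : 'M[C]_3 :=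
  mx3 [:: - e; (1 - e ^+ 2) / d; 0] [:: d; e; 0] [:: 0; 0; 1].
Definition N2 (k : C) : 'M[C]_3 :=
  mx3 [:: 0; k; 0] [:: k^-1; 0; 0] [:: 0; 0; 1].
Definition M3 (d p : C) : 'M[C]_3 :=
  mx3 [:: 1; 0; 0] [:: d; -1; 2 * p - d * p ^+ 2] [:: 0; 0; 1].
Definition N3 (p : C) : 'M[C]_3 :=
  mx3 [:: 1; 0; 0] [:: p^-1; -1; p] [:: 0; 0; 1].
Definition M4 (h k : C) : 'M[C]_3 :=
  mx3 [:: 1; 2 * k - h * k ^+ 2; 0] [:: 0; -1; 0] [:: 0; h; 1].
Definition N4 (k : C) : 'M[C]_3 :=
  mx3 [:: 1; k; 0] [:: 0; -1; 0] [:: 0; k^-1; 1].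
Definition M5 (b : C) : 'M[C]_3 :=
  mx3 [:: 1; b; 0] [:: 0; -1; 0] [:: 0; 0; 1].
Definition N5 (k : C) : 'M[C]_3 := N2 k.
Definition M6 (b : C) : 'M[C]_3 :=
  mx3 [:: -1; b; 0] [:: 0; 1; 0] [:: 0; 0; 1].
Definition N6 (k : C) : 'M[C]_3 := N2 k.
Definition M7 : 'M[C]_3 := 1%:M.
Definition N7 (p : C) : 'M[C]_3 := N3 p.
Definition M8 : 'M[C]_3 := 1%:M.
Definition N8 (k : C) : 'M[C]_3 := N4 k.
Definition M9 : 'M[C]_3 :=
  mx3 [:: 1; 0; 0] [:: 0; -1; 0] [:: 0; 0; -1].
Definition N9 (p : C) : 'M[C]_3 := N1 p.
Definition M10 : 'M[C]_3 :=
  mx3 [:: 1; 0; 0] [:: 0; -1; 0] [:: 0; 0; 1].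
Definition N10 (p : C) : 'M[C]_3 := N9 p.
Definition M11 : 'M[C]_3 := 1%:M.
Definition N11 (p : C) : 'M[C]_3 := N9 p.
Definition M12 : 'M[C]_3 :=
  mx3 [:: -1; 0; 0] [:: 0; -1; 0] [:: 0; 0; 1].
Definition N12 (k : C) : 'M[C]_3 := N2 k.
Definition M13 : 'M[C]_3 := 1%:M.
Definition N13 (k : C) : 'M[C]_3 := N12 k.
Definition M14 : 'M[C]_3 := 1%:M.
Definition N14 : 'M[C]_3 := 1%:M.

From Pilot Require Import Defs.
From mathcomp Require Import all_boot all_algebra.
From mathcomp Require Import complex.
From mathcomp Require Import Rstruct.
From mathcomp Require Import all_fingroup zify ring.
Set Implicit Arguments. Unset Strict Implicit. Unset Printing Implicit Defensive.
Import GRing.Theory.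

(* Each case is proved by exhibiting two words u, v that are different in VT_n
   but have the same image.  As all generators are involutions, u v^-1 is the
   positive word u ++ rev v, which is then a nontrivial element of the kernel.
   Nontriviality is detected in S_n (s_i, rho_i |-> (i i+1)) or in Z/2
   (s_i |-> 1, rho_i |-> 0).  The words only involve s_1, s_2 and rho_1, whose
   images are supported on the upper-left 4x4 corner, so the required matrix
   identities are 4x4 computations:
   - delta(rho_1 s_1 rho_1) commutes with delta(s_2) for delta_1 (e = 1), delta_5;
   - (delta(rho_1 s_2))^2 = (delta(s_2 rho_1))^2 for delta_2 (e = 1), delta_6;
   - delta(s_1) and delta(s_2) commute when M is diagonal (delta_9, 10, 12);
   - delta(s_1) = delta(rho_1) when M = N (delta_3 with d = 1/p, delta_4 with h = 1/k);
   - delta(s_1) = 1 when M = I (delta_7, 8, 11, 13, 14). *)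

Section EvalWords.
Variables (n : nat) (T : Type) (mul : T -> T -> T) (one : T).
Hypotheses (mulA : associative mul) (mul1 : left_id one mul) (mulx1 : right_id one mul).
Variable f : VTgen n -> T.
Hypothesis f_invol : forall g, mul (f g) (f g) = one.
Notation ev := (evalw mul one f).

Lemma evalw_cons g w : ev (g :: w) = mul (f g) (ev w).
Proof. by []. Qed.

Lemma evalw_cat u v : ev (u ++ v) = mul (ev u) (ev v).
Proof. by elim: u => [|g u IHu] /=; rewrite ?mul1 // -mulA -IHu. Qed.

Lemma evalw_mul_rev w : mul (ev w) (ev (rev w)) = one.
Proof.
elim: w => [|g w IHw]; first exact: mul1.
rewrite rev_cons -cats1 evalw_cat !evalw_cons mulx1 -!mulA (mulA (ev w)) IHw mul1.
exact: f_invol.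
Qed.

Lemma evalw_cat_rev_eq1 u v : ev (u ++ rev v) = one <-> ev u = ev v.
Proof.
rewrite evalw_cat; split=> [uv1 | ->]; last exact: evalw_mul_rev.
have := evalw_mul_rev (rev v); rewrite revK => vv1.
by have := congr1 (mul^~ (ev v)) uv1; rewrite -mulA vv1 mulx1 mul1.
Qed.
End EvalWords.

Lemma VTrel_invol n (T : Type) (mul : T -> T -> T) (one : T) (f : VTgen n -> T) :
  VTrel mul one f -> forall g, mul (f g) (f g) = one.
Proof. by case=> invol_s [_ [_ [_ [invol_rho _]]]] []. Qed.

Section GroupFacts.
Variable G : Defs.group.

(* [Defs.group] only postulates a left identity and left inverses. *)

Lemma gmulxV (x : G) : gmul x (ginv x) = gone G.
Proof.
set y := gmul x (ginv x).
have yy : gmul y y = y by rewrite /y -gmulA (gmulA (ginv x)) gmulV gmul1.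
by rewrite -(gmulV y) -{3}yy gmulA gmulV gmul1.
Qed.

Lemma gmulx1 (x : G) : gmul x (gone G) = x.
Proof. by rewrite -(gmulV x) gmulA gmulxV gmul1. Qed.

Lemma VTnontrivial_cat_rev n (f : VTgen n -> G) (u v : seq (VTgen n)) :
  VTrel (@gmul G) (gone G) f ->
  evalw (@gmul G) (gone G) f u <> evalw (@gmul G) (gone G) f v ->
  ~ VTtrivial (u ++ rev v).
Proof.
move=> frel uv triv; apply: uv; apply/(evalw_cat_rev_eq1 (@gmulA G) (@gmul1 G)).
- exact: gmulx1.
- exact: VTrel_invol frel.
- exact: triv.
Qed.
End GroupFacts.

Section PermutationImage.
Variable m : nat.

Definition perm_group : Defs.group :=
  @Defs.Group {perm 'I_m.+1} (fun x y => x * y)%g 1%g (fun x => x^-1)%g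
    (@mulgA _) (@mul1g _) (@mulVg _).

Definition adj_tperm (k : nat) : {perm 'I_m.+1} := tperm (inord k) (inord k.+1).

Lemma adj_tpermE k x : (k < m)%N -> (x <= m)%N ->
  adj_tperm k (inord x) = inord (if x == k then k.+1 else if x == k.+1 then k else x).
Proof.
move=> km xm; rewrite /adj_tperm.
have [->|xk] := eqVneq x k; first by rewrite tpermL.
have [->|xk1] := eqVneq x k.+1; first by rewrite tpermR.
by rewrite tpermD //; rewrite -(inj_eq val_inj) /= !inordK //; lia.
Qed.

Lemma adj_tperm_commute i j : (i < m)%N -> (j < m)%N -> (i + 2 <= j)%N || (j + 2 <= i)%N ->
  (adj_tperm i * adj_tperm j = adj_tperm j * adj_tperm i)%g.
Proof.
move=> im jm ij; rewrite conjgC; congr (_ * _)%g.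
rewrite {1}/adj_tperm tpermJ !adj_tpermE //; try lia.
by rewrite !ifN //; lia.
Qed.

Lemma adj_tperm_braid i : (i.+1 < m)%N ->
  (adj_tperm i * adj_tperm i.+1 * adj_tperm i = adj_tperm i.+1 * adj_tperm i * adj_tperm i.+1)%g.
Proof.
move=> im.
have conj_adj j k : (adj_tperm j * adj_tperm k * adj_tperm j = adj_tperm k ^ adj_tperm j)%g.
  by rewrite conjgE tpermV mulgA.
rewrite !conj_adj {2 4}/adj_tperm !tpermJ !adj_tpermE //; try lia.
by repeat (case: eqP => ?; try lia).
Qed.

Definition VTperm (g : VTgen m.+1) : perm_group :=
  match g with VTs k | VTrho k => adj_tperm k end.

Lemma VTperm_rel : VTrel (@gmul perm_group) (gone perm_group) VTperm.
Proof.
have adj_tperm2 k : (adj_tperm k * adj_tperm k = 1)%g by apply: tperm2.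
have braid (i j : 'I_m) : j == i.+1 :> nat -> (adj_tperm i * adj_tperm j * adj_tperm i
    = adj_tperm j * adj_tperm i * adj_tperm j)%g.
  by move/eqP=> ji; rewrite ji; apply: adj_tperm_braid; rewrite -ji.
by do !split=> * /=; (apply: adj_tperm_commute || apply: braid || apply: adj_tperm2).
Qed.
End PermutationImage.

Definition parity_group : Defs.group :=
  @Defs.Group bool addb false id addbA (fun x => erefl) addbb.

Definition VTparity n (g : VTgen n) : parity_group :=
  if g is VTs _ then true else false.

Lemma VTparity_rel n : VTrel (@gmul parity_group) (gone parity_group) (@VTparity n).
Proof. by do !split. Qed.

Section LowGenerators.
Variable n' : nat.

Definition s1 : VTgen n'.+3 := @VTs n'.+3 (@Ordinal n'.+2 0 isT).
Definition s2 : VTgen n'.+3 := @VTs n'.+3 (@Ordinal n'.+2 1 isT).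
Definition rho1 : VTgen n'.+3 := @VTrho n'.+3 (@Ordinal n'.+2 0 isT).

Ltac separate_in_perm :=
  apply: VTnontrivial_cat_rev (VTperm_rel _) _;
  move=> /(congr1 (fun s : {perm 'I_n'.+3} => val (s (inord 0))));
  rewrite /= !permM !perm1 /=; do ![rewrite adj_tpermE //=]; rewrite !inordK.

Lemma VTnontrivial_comm_rho1s1rho1_s2 :
  ~ VTtrivial ([:: rho1; s1; rho1; s2] ++ rev [:: s2; rho1; s1; rho1]).
Proof. by separate_in_perm. Qed.

Lemma VTnontrivial_rho1s2_sq_eq :
  ~ VTtrivial ([:: rho1; s2; rho1; s2] ++ rev [:: s2; rho1; s2; rho1]).
Proof. by separate_in_perm. Qed.

Lemma VTnontrivial_comm_s1_s2 : ~ VTtrivial ([:: s2; s1] ++ rev [:: s1; s2]).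
Proof. by separate_in_perm. Qed.

Lemma VTnontrivial_s1 : ~ VTtrivial ([:: s1] ++ rev [::]).
Proof. exact: VTnontrivial_cat_rev (VTparity_rel _) _. Qed.

Lemma VTnontrivial_s1_rho1 : ~ VTtrivial ([:: s1] ++ rev [:: rho1]).
Proof. exact: VTnontrivial_cat_rev (VTparity_rel _) _. Qed.
End LowGenerators.

Local Open Scope ring_scope.

Lemma evalw_conj (R : comUnitRingType) n (D D' : VTgen n -> 'M[R]_n.+1) (P : 'M[R]_n.+1) :
  P \in unitmx -> (forall g, D g = invmx P *m D' g *m P) ->
  forall w, evalw mulmx 1 D w = invmx P *m evalw mulmx 1 D' w *m P.
Proof.
move=> Punit DD'; elim=> [|g w IHw]; first by rewrite /= mulmx1 mulVmx.
by rewrite !evalw_cons IHw DD' !mulmxA (mulmxK Punit).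
Qed.

Lemma unfaithful_of_equiv_evalw_eq n (M N M' N' : 'M[C]_3) (u v : seq (VTgen n)) :
  VTrel (@mulmx C n.+1 n.+1 n.+1) 1 (delta M N) -> equiv_rep n M N M' N' ->
  evalw mulmx 1 (delta M' N') u = evalw mulmx 1 (delta M' N') v ->
  ~ VTtrivial (u ++ rev v) -> unfaithful n M N.
Proof.
move=> rel [P [Punit MN]] uv uv_nontriv; exists (u ++ rev v); split=> //.
apply/(evalw_cat_rev_eq1 (@mulmxA _ _ _ _ _) (@mul1mx _ _ _) (@mulmx1 _ _ _)).
  exact: VTrel_invol rel.
by rewrite !(evalw_conj Punit MN) uv.
Qed.

Lemma loc3_id n k : loc3 n 1%:M k = 1%:M.
Proof.
apply/matrixP => a b; rewrite /loc3 !mxE.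
case: ifP => // /andP[/andP[ka ak] /andP[kb bk]].
rewrite -(inj_eq val_inj) /= !inordK; try lia.
by rewrite eqn_sub2rE.
Qed.

Section Corner.
Variable p : nat.

Definition corner4 (X : 'M[C]_4) : 'M[C]_(p.+4) := block_mx X 0 0 (1%:M : 'M_p).

Lemma corner4M X Y : corner4 X *m corner4 Y = corner4 (X *m Y).
Proof.
have := @mulmx_block C 4 p 4 p 4 p X 0 0 1%:M Y 0 0 1%:M.
by rewrite !mulmx0 !mul0mx !addr0 !add0r mul1mx.
Qed.

Lemma corner4_id : corner4 1%:M = 1%:M.
Proof. by rewrite /corner4 (@scalar_mx_block C 4 p 1). Qed.

Lemma corner4E X (a b : 'I_p.+4) :
  corner4 X a b = if ((a < 4) && (b < 4))%N then X (inord a) (inord b) else (a == b)%:R.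
Proof.
have lo (i : 'I_p.+4) (i' : 'I_4) : i = i' :> nat -> i = lshift p i'.
  by move=> ?; apply: val_inj.
have hi (i : 'I_p.+4) (i' : 'I_p) : i = (4 + i')%N :> nat -> i = rshift 4 i'.
  by move=> ?; apply: val_inj.
rewrite /corner4; case: (@splitP 4 p a) => [a' /lo -> | a' /hi ->];
  case: (@splitP 4 p b) => [b' /lo -> | b' /hi ->] /=.
- by rewrite (block_mxEul X 0 0 (1%:M : 'M_p)) !inord_val.
- rewrite (block_mxEur X 0 0 (1%:M : 'M_p)) mxE.
  by case: eqP => // /(congr1 val) /=; have := ltn_ord a'; lia.
- rewrite (block_mxEdl X 0 0 (1%:M : 'M_p)) mxE.
  by case: eqP => // /(congr1 val) /=; have := ltn_ord b'; lia.
- by rewrite (block_mxEdr X 0 0 (1%:M : 'M_p)) mxE (inj_eq (@rshift_inj 4 p)).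
Qed.

Lemma loc3_corner4 A k : (k <= 1)%N -> loc3 p.+3 A k = corner4 (loc3 3 A k).
Proof.
move=> k1; apply/matrixP => a b; rewrite corner4E /loc3 !mxE.
case: (ltnP a 4) => a4; case: (ltnP b 4) => b4 /=.
- by rewrite -[in RHS](inj_eq val_inj) /= !inordK.
- by case: ifP => // /andP[_ /andP[_ ?]]; lia.
- by case: ifP => // /andP[/andP[_ ?] _]; lia.
- by case: ifP => // /andP[/andP[_ ?] _]; lia.
Qed.
End Corner.

Section Criteria.
Variables (n' : nat) (M N M' N' : 'M[C]_3).
Hypothesis rel : VTrel (@mulmx C n'.+4 n'.+4 n'.+4) 1 (delta M N).
Hypothesis equivMN : equiv_rep n'.+3 M N M' N'.

Lemma delta_s1 A B : delta A B (s1 n') = corner4 n' (loc3 3 A 0).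
Proof. exact: loc3_corner4. Qed.
Lemma delta_s2 A B : delta A B (s2 n') = corner4 n' (loc3 3 A 1).
Proof. exact: loc3_corner4. Qed.
Lemma delta_rho1 A B : delta A B (rho1 n') = corner4 n' (loc3 3 B 0).
Proof. exact: loc3_corner4. Qed.

Ltac lift_to_corner :=
  rewrite !evalw_cons !(delta_s1, delta_s2, delta_rho1) [evalw _ _ _ [::]]/=;
  rewrite !mulmx1 !corner4M;
  congr corner4; rewrite ?mulmxA.

Lemma unfaithful_of_comm_rho1s1rho1_s2 :
  comm_mx (loc3 3 N' 0 *m loc3 3 M' 0 *m loc3 3 N' 0) (loc3 3 M' 1) -> unfaithful n'.+3 M N.
Proof.
move=> comm.
apply: (unfaithful_of_equiv_evalw_eq rel equivMN _ (@VTnontrivial_comm_rho1s1rho1_s2 n')).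
by lift_to_corner; rewrite comm !mulmxA.
Qed.

Lemma unfaithful_of_rho1s2_sq_eq :
  let X := loc3 3 N' 0 *m loc3 3 M' 1 in let Y := loc3 3 M' 1 *m loc3 3 N' 0 in
  X *m X = Y *m Y -> unfaithful n'.+3 M N.
Proof.
move=> X Y XY.
apply: (unfaithful_of_equiv_evalw_eq rel equivMN _ (@VTnontrivial_rho1s2_sq_eq n')).
by lift_to_corner; move: XY; rewrite /X /Y !mulmxA.
Qed.

Lemma unfaithful_of_comm_s1_s2 :
  comm_mx (loc3 3 M' 1) (loc3 3 M' 0) -> unfaithful n'.+3 M N.
Proof.
move=> comm.
apply: (unfaithful_of_equiv_evalw_eq rel equivMN _ (@VTnontrivial_comm_s1_s2 n')).
by lift_to_corner; apply: comm.
Qed.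

Lemma unfaithful_of_same_blocks : M' = N' -> unfaithful n'.+3 M N.
Proof.
move=> M'N'; apply: (unfaithful_of_equiv_evalw_eq rel equivMN _ (@VTnontrivial_s1_rho1 n')).
by rewrite M'N'.
Qed.

Lemma unfaithful_of_trivial_s : M' = 1%:M -> unfaithful n'.+3 M N.
Proof.
move=> M'1; apply: (unfaithful_of_equiv_evalw_eq rel equivMN _ (@VTnontrivial_s1 n')).
by rewrite M'1 evalw_cons delta_s1 loc3_id corner4_id mul1mx.
Qed.
End Criteria.

Definition mx4 (f : nat -> nat -> C) : 'M[C]_4 := \matrix_(i, j) f i j.

Definition mul4 (f g : nat -> nat -> C) (i j : nat) : C :=
  f i 0%N * g 0%N j + f i 1%N * g 1%N j + f i 2%N * g 2%N j + f i 3%N * g 3%N j.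

Lemma mx4M f g : mx4 f *m mx4 g = mx4 (mul4 f g).
Proof. by apply/matrixP => i j; rewrite !mxE !big_ord_recr big_ord0 /= add0r !mxE. Qed.

Lemma eq_mx4 f g : (forall i j, (i < 4)%N -> (j < 4)%N -> f i j = g i j) -> mx4 f = mx4 g.
Proof. by move=> fg; apply/matrixP => i j; rewrite !mxE fg. Qed.

Definition rows4 (rows : seq (seq C)) (i j : nat) : C := (nth [::] rows i)`_j.

Lemma loc3_mx3_0 (a b c d e f g h k : C) :
  loc3 3 (mx3 [:: a; b; c] [:: d; e; f] [:: g; h; k]) 0 =
  mx4 (rows4 [:: [:: a; b; c; 0]; [:: d; e; f; 0]; [:: g; h; k; 0]; [:: 0; 0; 0; 1]]).
Proof.
by apply/matrixP; do 4?case=> [[|[|[|[|?]]]] ?] //; rewrite /loc3 !mxE /= ?inordK.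
Qed.

Lemma loc3_mx3_1 (a b c d e f g h k : C) :
  loc3 3 (mx3 [:: a; b; c] [:: d; e; f] [:: g; h; k]) 1 =
  mx4 (rows4 [:: [:: 1; 0; 0; 0]; [:: 0; a; b; c]; [:: 0; d; e; f]; [:: 0; g; h; k]]).
Proof.
by apply/matrixP; do 4?case=> [[|[|[|[|?]]]] ?] //; rewrite /loc3 !mxE /= ?inordK.
Qed.

Ltac mx4_entrywise :=
  rewrite ?loc3_mx3_0 ?loc3_mx3_1 ?mx4M; apply: eq_mx4;
  case=> [|[|[|[|?]]]] //; case=> [|[|[|[|?]]]] //= _ _; rewrite /mul4 /rows4 /=.

Lemma comm_rho1s1rho1_s2_M1_N1 h p : p != 0 ->
  comm_mx (loc3 3 (N1 p) 0 *m loc3 3 (M1 1 h) 0 *m loc3 3 (N1 p) 0) (loc3 3 (M1 1 h) 1).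
Proof.
by move=> p0; rewrite /comm_mx /M1 /N1 expr1n subrr mul0r; mx4_entrywise; field; rewrite ?p0.
Qed.

Lemma comm_rho1s1rho1_s2_M5_N5 b k : k != 0 ->
  comm_mx (loc3 3 (N5 k) 0 *m loc3 3 (M5 b) 0 *m loc3 3 (N5 k) 0) (loc3 3 (M5 b) 1).
Proof. by move=> k0; rewrite /comm_mx /M5 /N5 /N2; mx4_entrywise; field; rewrite ?k0. Qed.

Lemma rho1s2_sq_eq_M2_N2 d k : k != 0 ->
  let X := loc3 3 (N2 k) 0 *m loc3 3 (M2 1 d) 1 in
  let Y := loc3 3 (M2 1 d) 1 *m loc3 3 (N2 k) 0 in X *m X = Y *m Y.
Proof.
by move=> k0; rewrite /M2 /N2 expr1n subrr mul0r !mulmxA; mx4_entrywise; field; rewrite ?k0.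
Qed.

Lemma rho1s2_sq_eq_M6_N6 b k : k != 0 ->
  let X := loc3 3 (N6 k) 0 *m loc3 3 (M6 b) 1 in
  let Y := loc3 3 (M6 b) 1 *m loc3 3 (N6 k) 0 in X *m X = Y *m Y.
Proof. by move=> k0; rewrite /M6 /N6 /N2 !mulmxA; mx4_entrywise; field; rewrite ?k0. Qed.

Lemma comm_s2_s1_diag a b c :
  let D := mx3 [:: a; 0; 0] [:: 0; b; 0] [:: 0; 0; c] in comm_mx (loc3 3 D 1) (loc3 3 D 0).
Proof. by rewrite /comm_mx; mx4_entrywise; ring. Qed.

Lemma M3_eq_N3 p : p != 0 -> M3 p^-1 p = N3 p.
Proof.
by move=> p0; rewrite /M3 /N3 expr2 mulrA mulVf // mul1r mulr2n mulrDl mul1r addrK.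
Qed.

Lemma M4_eq_N4 k : k != 0 -> M4 k^-1 k = N4 k.
Proof.
by move=> k0; rewrite /M4 /N4 expr2 mulrA mulVf // mul1r mulr2n mulrDl mul1r addrK.
Qed.

Unset Implicit Arguments.

Theorem theorem4p5 (n : nat) (Hn : (4 <= n)%N) (M N : 'M[C]_3)
  (Hrep : VTrel (@mulmx C n.+1 n.+1 n.+1) 1%R (delta M N)) :
  (* (1) *)
  (forall (e h p : C), h != 0 -> p != 0 ->
     equiv_rep n M N (M1 e h) (N1 p) -> e = 1 -> unfaithful n M N) /\
  (* (2) *)
  (forall (e d k : C), d != 0 -> k != 0 ->
     equiv_rep n M N (M2 e d) (N2 k) -> e = 1 -> unfaithful n M N) /\
  (* (3) *)
  (forall (d p : C), p != 0 ->
     equiv_rep n M N (M3 d p) (N3 p) -> d = p^-1 -> unfaithful n M N) /\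
  (* (4) *)
  (forall (h k : C), k != 0 ->
     equiv_rep n M N (M4 h k) (N4 k) -> h = k^-1 -> unfaithful n M N) /\
  (* (5) *)
  ((exists (b k : C), k != 0 /\ equiv_rep n M N (M5 b) (N5 k)) \/
   (exists (b k : C), k != 0 /\ equiv_rep n M N (M6 b) (N6 k)) \/
   (exists p : C, p != 0 /\ equiv_rep n M N M7 (N7 p)) \/
   (exists k : C, k != 0 /\ equiv_rep n M N M8 (N8 k)) \/
   (exists p : C, p != 0 /\ equiv_rep n M N M9 (N9 p)) \/
   (exists p : C, p != 0 /\ equiv_rep n M N M10 (N10 p)) \/
   (exists p : C, p != 0 /\ equiv_rep n M N M11 (N11 p)) \/
   (exists k : C, k != 0 /\ equiv_rep n M N M12 (N12 k)) \/
   (exists k : C, k != 0 /\ equiv_rep n M N M13 (N13 k)) \/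
   equiv_rep n M N M14 N14 ->
   unfaithful n M N).
Proof.
case: n Hn M N Hrep => [|[|[|[|n]]]] // _ M N rel.
split; [|split; [|split; [|split]]].
- move=> e h p _ p0 /[swap] -> equiv; apply: (unfaithful_of_comm_rho1s1rho1_s2 rel equiv).
  exact: comm_rho1s1rho1_s2_M1_N1.
- move=> e d k _ k0 /[swap] -> equiv; apply: (unfaithful_of_rho1s2_sq_eq rel equiv).
  exact: rho1s2_sq_eq_M2_N2.
- move=> d p p0 /[swap] -> equiv; apply: (unfaithful_of_same_blocks rel equiv).
  exact: M3_eq_N3.
- move=> h k k0 /[swap] -> equiv; apply: (unfaithful_of_same_blocks rel equiv).
  exact: M4_eq_N4.
case=> [[b [k [k0 equiv]]] | [[b [k [k0 equiv]]] | [[p [_ equiv]] | [[k [_ equiv]] |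
  [[p [_ equiv]] | [[p [_ equiv]] | [[p [_ equiv]] | [[k [_ equiv]] | [[k [_ equiv]] | equiv]]]]]]]]].
- apply: (unfaithful_of_comm_rho1s1rho1_s2 rel equiv); exact: comm_rho1s1rho1_s2_M5_N5.
- apply: (unfaithful_of_rho1s2_sq_eq rel equiv); exact: rho1s2_sq_eq_M6_N6.
- exact: unfaithful_of_trivial_s rel equiv _.
- exact: unfaithful_of_trivial_s rel equiv _.
- exact: unfaithful_of_comm_s1_s2 rel equiv (comm_s2_s1_diag 1 (-1) (-1)).
- exact: unfaithful_of_comm_s1_s2 rel equiv (comm_s2_s1_diag 1 (-1) 1).
- exact: unfaithful_of_trivial_s rel equiv _.
- exact: unfaithful_of_comm_s1_s2 rel equiv (comm_s2_s1_diag (-1) (-1) 1).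
- exact: unfaithful_of_trivial_s rel equiv _.
- exact: unfaithful_of_trivial_s rel equiv _.
Qed.
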